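(* Let $n\ge1$. If $f,g,h:\Omega_n\to\mathbb{R}$ have mutually disjoint supports, then $\int(f+g+h)\,d\mu_n=\int(f+g)\,d\mu_n+\int(f+h)\,d\mu_n+\int(g+h)\,d\mu_n-\int f\,d\mu_n-\int g\,d\mu_n-\int h\,d\mu_n$.
   Context: For $n\ge1$, $\Omega_n=\{\omega_0,\dots,\omega_{2^n-1}\}$ is the set of strings $\alpha_0\alpha_1\cdots\alpha_n$ with $\alpha_k\in\{0,1\}$, $\alpha_0=0$, $\omega_j$ being the binary representation of $j$ (with $\alpha_n$ least significant). $D^n_{jk}=D^n(\omega_j,\omega_k)$ where $D^n(\omega,\omega')=2^{-n}\prod_{k=1}^n i^{|\alpha_k-\alpha_{k-1}|}\prod_{k=1}^n i^{-|\alpha'_k-\alpha'_{k-1}|}\,\delta_{\alpha_n\alpha'_n}$ for $\omega=\alpha_0\cdots\alpha_n$, $\omega'=\alpha'_0\cdots\alpha'_n$ ($i=\sqrt{-1}$). For $u:\Omega_n\to[0,\infty)$, $\int u\,d\mu_n=\sum_{j,k=0}^{2^n-1}\min[u(\omega_j),u(\omega_k)]\,D^n_{jk}$; for arbitrary $f:\Omega_n\to\mathbb{R}$ written as $f=f^+-f^-$ with $f^\pm\ge0$, $f^+f^-=0$, $\int f\,d\mu_n=\int f^+d\mu_n-\int f^-d\mu_n$. *)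

From HB Require Import structures.
From mathcomp Require Import all_boot all_order all_algebra.
From mathcomp Require Import complex.
From mathcomp Require Import reals.
Set Implicit Arguments. Unset Strict Implicit. Unset Printing Implicit Defensive.
Import Order.TTheory GRing.Theory Num.Theory.
Local Open Scope ring_scope.
Local Open Scope complex_scope.

(* Omega_n = {omega_0, ..., omega_{2^n-1}} is indexed by j : 'I_(2^n).
   omega_j = alpha_0 alpha_1 ... alpha_n is the binary representation of j
   (n+1 digits, alpha_n least significant, alpha_0 = 0 since j < 2^n).
   alpha j k is the digit alpha_k of omega_j, for 0 <= k <= n. *)
Definition alpha (n : nat) (j : 'I_(2 ^ n)) (k : nat) : nat :=
  ((j %/ 2 ^ (n - k)) %% 2)%N.

Definition Dn (R : realType) (n : nat) (j k : 'I_(2 ^ n)) : R[i] :=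
  ((2 : R) ^- n)%:C
  * (\prod_(m < n) 'i ^+ `|(alpha j m.+1)%:Z - (alpha j m)%:Z|%N)
  * (\prod_(m < n) 'i ^- `|(alpha k m.+1)%:Z - (alpha k m)%:Z|%N)
  * (if alpha j n == alpha k n then 1 else 0).

Definition integral_nonneg (R : realType) (n : nat) (u : 'I_(2 ^ n) -> R)
  : R[i] :=
  \sum_(j < 2 ^ n) \sum_(k < 2 ^ n) (Num.min (u j) (u k))%:C * Dn R j k.

Definition pos_part (R : realType) (n : nat) (f : 'I_(2 ^ n) -> R) :=
  fun x => Num.max (f x) 0.
Definition neg_part (R : realType) (n : nat) (f : 'I_(2 ^ n) -> R) :=
  fun x => Num.max (- f x) 0.

Definition integral (R : realType) (n : nat) (f : 'I_(2 ^ n) -> R) : R[i] :=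
  integral_nonneg (pos_part f) - integral_nonneg (neg_part f).

Definition disjoint_supports (R : realType) (n : nat)
  (f g : 'I_(2 ^ n) -> R) : Prop :=
  forall x, f x = 0 \/ g x = 0.

From mathcomp Require Import all_boot all_order all_algebra.
From mathcomp Require Import complex.
From mathcomp Require Import reals.
From mathcomp Require Import ring.
Import Order.TTheory GRing.Theory Num.Theory.
Local Open Scope ring_scope.

(* Positive and negative parts
   preserve disjointness and turn disjoint sums into sums, so the identity
   passes to [integral]. *)

Lemma maxr0_add_disjoint (R : realDomainType) (x y : R) :
  x = 0 \/ y = 0 -> Num.max (x + y) 0 = Num.max x 0 + Num.max y 0.
Proof. by case=> ->; rewrite ?add0r ?addr0 maxxx ?add0r ?addr0. Qed.

Lemma min_add3_disjoint (R : realDomainType) (a1 b1 c1 a2 b2 c2 : R) :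
  0 <= a1 -> 0 <= b1 -> 0 <= c1 -> 0 <= a2 -> 0 <= b2 -> 0 <= c2 ->
  a1 = 0 \/ b1 = 0 -> a1 = 0 \/ c1 = 0 -> b1 = 0 \/ c1 = 0 ->
  a2 = 0 \/ b2 = 0 -> a2 = 0 \/ c2 = 0 -> b2 = 0 \/ c2 = 0 ->
  Num.min (a1 + b1 + c1) (a2 + b2 + c2)
  = Num.min (a1 + b1) (a2 + b2) + Num.min (a1 + c1) (a2 + c2)
    + Num.min (b1 + c1) (b2 + c2)
    - Num.min a1 a2 - Num.min b1 b2 - Num.min c1 c2.
Proof.
move=> ha1 hb1 hc1 ha2 hb2 hc2.
have min0r x : 0 <= x -> Num.min 0 x = 0 := @min_l _ _ 0 x.
have minr0 x : 0 <= x -> Num.min x 0 = 0 := @min_r _ _ x 0.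
by do 6!case=> ?; subst; rewrite ?addr0 ?add0r ?minxx ?min0r ?minr0 //; ring.
Qed.

Section InclusionExclusion.

Context {R : realType} {n : nat}.
Implicit Types (u v w : 'I_(2 ^ n) -> R) (p : ('I_(2 ^ n) -> R) -> 'I_(2 ^ n) -> R).

Lemma eq_integral_nonneg {u v} : u =1 v -> integral_nonneg u = integral_nonneg v.
Proof.
by move=> e; apply: eq_bigr => j _; apply: eq_bigr => k _; rewrite !e.
Qed.

Lemma integral_nonneg_add3_disjoint u v w :
  (forall x, 0 <= u x) -> (forall x, 0 <= v x) -> (forall x, 0 <= w x) ->
  disjoint_supports u v -> disjoint_supports u w -> disjoint_supports v w ->
  integral_nonneg (fun x => u x + v x + w x)
  = integral_nonneg (fun x => u x + v x) + integral_nonneg (fun x => u x + w x)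
    + integral_nonneg (fun x => v x + w x)
    - integral_nonneg u - integral_nonneg v - integral_nonneg w.
Proof.
move=> u0 v0 w0 uv uw vw; rewrite /integral_nonneg.
rewrite -!big_split -!sumrB; apply: eq_bigr => j _.
rewrite -!big_split -!sumrB; apply: eq_bigr => k _ /=.
rewrite min_add3_disjoint // !rmorphB !rmorphD /=; ring.
Qed.

Lemma disjoint_supportsDl {u v w} :
  disjoint_supports u w -> disjoint_supports v w ->
  disjoint_supports (fun x => u x + v x) w.
Proof.
move=> uw vw x; case: (uw x) (vw x) => [-> [->|]|]; auto.
by left; rewrite addr0.
Qed.

Lemma disjoint_supportsN {u v} :
  disjoint_supports u v -> disjoint_supports (fun x => - u x) (fun x => - v x).
Proof. by move=> uv x; case: (uv x) => ->; rewrite oppr0; auto. Qed.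

Definition disjointly_additive_part p :=
  [/\ forall u x, 0 <= p u x,
      forall u v, disjoint_supports u v ->
        p (fun x => u x + v x) =1 (fun x => p u x + p v x)
    & forall u v, disjoint_supports u v -> disjoint_supports (p u) (p v)].

Lemma pos_part_disjointly_additive : disjointly_additive_part (@pos_part R n).
Proof.
split=> [u x|u v uv x|u v uv x]; rewrite /pos_part.
- by rewrite le_max lexx orbT.
- exact: maxr0_add_disjoint.
- by case: (uv x) => ->; rewrite maxxx; auto.
Qed.

Lemma neg_part_disjointly_additive : disjointly_additive_part (@neg_part R n).
Proof.
have [pos0 posD posI] := pos_part_disjointly_additive.
split=> [u x|u v /disjoint_supportsN uv x|u v /disjoint_supportsN uv].
- exact: (pos0 (fun x => - u x)).
- by rewrite /neg_part opprD; apply: (posD _ _ uv).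
- exact: (posI _ _ uv).
Qed.

Lemma integral_nonneg_part_add3_disjoint {p u v w} :
  disjointly_additive_part p ->
  disjoint_supports u v -> disjoint_supports u w -> disjoint_supports v w ->
  integral_nonneg (p (fun x => u x + v x + w x))
  = integral_nonneg (p (fun x => u x + v x))
    + integral_nonneg (p (fun x => u x + w x))
    + integral_nonneg (p (fun x => v x + w x))
    - integral_nonneg (p u) - integral_nonneg (p v) - integral_nonneg (p w).
Proof.
move=> [p0 pD pI] uv uw vw.
have pD3 : p (fun x => u x + v x + w x) =1 (fun x => p u x + p v x + p w x).
  by move=> x; rewrite (pD _ _ (disjoint_supportsDl uw vw)) pD.
rewrite (eq_integral_nonneg pD3) (eq_integral_nonneg (pD _ _ uv)).
rewrite (eq_integral_nonneg (pD _ _ uw)) (eq_integral_nonneg (pD _ _ vw)).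
exact: integral_nonneg_add3_disjoint (p0 u) (p0 v) (p0 w)
  (pI _ _ uv) (pI _ _ uw) (pI _ _ vw).
Qed.

End InclusionExclusion.

Theorem corollary5p5 (R : realType) (n : nat) (hn : (1 <= n)%N)
  (f g h : 'I_(2 ^ n) -> R)
  (hfg : disjoint_supports f g) (hfh : disjoint_supports f h)
  (hgh : disjoint_supports g h) :
  integral (fun x => f x + g x + h x)
  = integral (fun x => f x + g x) + integral (fun x => f x + h x)
    + integral (fun x => g x + h x)
    - integral f - integral g - integral h.
Proof.
rewrite /integral.
rewrite !(integral_nonneg_part_add3_disjoint pos_part_disjointly_additive) //.
rewrite !(integral_nonneg_part_add3_disjoint neg_part_disjointly_additive) //.
ring.
Qed.
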